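(* Let $\mathbb{F}\in\{\mathbb{R},\mathbb{C}\}$, let $F=\{f_i\}_{i=1}^n$ be a $2_c$-uniform $(n,k)$-frame in $\mathbb{F}^k$ with analysis operator $V$, and let $Q$ be its Seidel matrix, i.e. the $n\times n$ matrix with $VV^*=\frac{k}{n}I_n+c_{n,k}Q$, where $c_{n,k}=\sqrt{\frac{k(n-k)}{n^2(n-1)}}$. Then for every $1\le m\le n$, $$e_m^{\infty}(F)\le \frac{k}{n}+(m-1)c_{n,k},$$ with equality if and only if some $m\times m$ principal submatrix $Q_m$ of $Q$ (obtained by keeping the same set of $m$ rows and columns) is switching equivalent to $J_m-I_m$, where $J_m$ is the $m\times m$ all-ones matrix.
   Context: An $(n,k)$-frame is a Parseval frame $\{f_i\}_{i=1}^n$ for $\mathbb{F}^k$; its analysis operator $V:\mathbb{F}^k\to\mathbb{F}^n$, $Vx=(\langle x,f_i\rangle)_{i=1}^n$, is an isometry. Let $\mathcal{D}_m$ be the set of $n\times n$ diagonal matrices with exactly $m$ diagonal entries equal to $1$ and the rest $0$, and $e_m^{\infty}(F)=\max\{\|V^*DV\|: D\in\mathcal{D}_m\}$ (operator norm). $F$ is called $m$-uniform if $\|V^*DV\|$ is the same for all $D\in\mathcal{D}_m$, and $m_c$-uniform if it is $\ell$-uniform for every $\ell=1,\dots,m$; a $2_c$-uniform $(n,k)$-frame is exactly an equiangular Parseval frame, and for it $VV^*=\frac{k}{n}I+c_{n,k}Q$ with $Q$ a Seidel matrix. A Seidel matrix is a self-adjoint $n\times n$ matrix with zero diagonal and off-diagonal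 entries of modulus $1$. Two Seidel matrices $Q,S$ are switching equivalent if $Q=PDSD^{-1}P^{-1}$ for some permutation matrix $P$ and some diagonal matrix $D$ whose diagonal entries have modulus $1$. *)

From HB Require Import structures.
From mathcomp Require Import all_boot all_order all_algebra all_fingroup.
From mathcomp Require Import complex.
From mathcomp Require Import boolp classical_sets reals.
Set Implicit Arguments. Unset Strict Implicit. Unset Printing Implicit Defensive.
Import Order.TTheory GRing.Theory Num.Theory.
Local Open Scope ring_scope.
Local Open Scope classical_set_scope.

(* The scalar field F is encoded by a boolean [b]:
   b = true  : F = C = R[i];
   b = false : F = R, viewed inside R[i] as the elements with zero
               imaginary part. *)
Definition inF (R : realType) (b : bool) (z : R[i]) : bool := b || (z \is Num.real).

Definition vecF (R : realType) (b : bool) (k : nat) (x : 'cV[R[i]]_k) : bool :=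
  [forall i, inF b (x i 0)].

Definition vnorm (R : realType) (k : nat) (x : 'cV[R[i]]_k) : R :=
  Num.sqrt (\sum_(i < k) ((complex.Re (x i 0)) ^+ 2 + (complex.Im (x i 0)) ^+ 2)).

Definition opnorm (R : realType) (b : bool) (k : nat) (A : 'M[R[i]]_k) : R :=
  sup [set vnorm (A *m x) | x in [set x | vecF b x /\ vnorm x <= 1]].

Definition adj (R : realType) (m n : nat) (A : 'M[R[i]]_(m, n)) : 'M[R[i]]_(n, m) :=
  (map_mx Num.conj A)^T.

(* analysis operator: (V x)_i = <x, f_i> = sum_j x_j conj(f_i j) *)
Definition analysis (R : realType) (n k : nat) (f : 'I_n -> 'cV[R[i]]_k) : 'M[R[i]]_(n, k) :=
  \matrix_(i < n, j < k) Num.conj (f i j 0).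

(* {f_i} is an (n,k)-frame, i.e. a Parseval frame for F^k (V is an isometry) *)
Definition parseval_frame (R : realType) (b : bool) (n k : nat)
    (f : 'I_n -> 'cV[R[i]]_k) : Prop :=
  (forall i, vecF b (f i)) /\ adj (analysis f) *m analysis f = 1%:M.

Definition diagS (R : realType) (n : nat) (S : {set 'I_n}) : 'M[R[i]]_n :=
  diag_mx (\row_(i < n) (i \in S)%:R).

Definition Dnorm (R : realType) (b : bool) (n k : nat) (f : 'I_n -> 'cV[R[i]]_k)
    (S : {set 'I_n}) : R :=
  opnorm b (adj (analysis f) *m diagS R S *m analysis f).

Definition e_inf (R : realType) (b : bool) (n k : nat) (f : 'I_n -> 'cV[R[i]]_k)
    (m : nat) : R :=
  \big[Num.max/0]_(S : {set 'I_n} | #|S| == m) Dnorm b f S.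

Definition uniform (R : realType) (b : bool) (n k : nat) (f : 'I_n -> 'cV[R[i]]_k)
    (m : nat) : Prop :=
  forall S1 S2 : {set 'I_n}, #|S1| = m -> #|S2| = m -> Dnorm b f S1 = Dnorm b f S2.

Definition uniform_c (R : realType) (b : bool) (n k : nat) (f : 'I_n -> 'cV[R[i]]_k)
    (m : nat) : Prop :=
  forall l, (1 <= l <= m)%N -> uniform b f l.

Definition cnk (R : realType) (n k : nat) : R :=
  Num.sqrt ((k * (n - k))%:R / (n ^ 2 * (n - 1))%:R).

Definition seidel (R : realType) (n : nat) (Q : 'M[R[i]]_n) : Prop :=
  adj Q = Q /\ (forall i, Q i i = 0) /\ (forall i j, i != j -> `|Q i j| = 1).

Definition switching_equiv (R : realType) (m : nat) (Q S : 'M[R[i]]_m) : Prop :=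
  exists (p : 'S_m) (d : 'rV[R[i]]_m),
    (forall i, `|d 0 i| = 1) /\
    Q = perm_mx p *m diag_mx d *m S *m invmx (diag_mx d) *m invmx (perm_mx p).

Definition principal_sub (R : realType) (n m : nat) (Q : 'M[R[i]]_n) (s : 'I_m -> 'I_n)
  : 'M[R[i]]_m := \matrix_(i < m, j < m) Q (s i) (s j).

Definition JmI (R : realType) (m : nat) : 'M[R[i]]_m := const_mx 1 - 1%:M.

(* Let D be the coordinate projection onto a set S of m indices and c = c_{n,k}.
   Since V V^* = (k/n) I + c Q, the vector w = D V y satisfies
   <y, V^* D V y> = |w|^2 and |V^* D V y|^2 = (k/n) |w|^2 + c w^* Q w, so the
   norm of V^* D V is governed by the Hermitian form of the Seidel block Q_S.
   For w supported on S,
     sum_{i <> j in S} |w_i - Q_ij w_j|^2 = 2 (m - 1) |w|^2 - 2 Re (w^* Q w),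
   hence w^* Q w <= (m - 1) |w|^2 and ||V^* D V|| <= k/n + (m - 1) c.
   If some triangle i, j, p of S has Q_ij <> Q_ip Q_pj, the left-hand side stays
   above a fixed multiple of |w|^2 and the bound is strict for S.  Otherwise
   Q_ij = e_i conj(e_j) on S with |e_i| = 1, i.e. Q_S is switching equivalent to
   J - I, and V^* w with w_i = e_i conj(e_p) is an eigenvector of V^* D V for
   the bound.  As e_m^oo(F) is a maximum over finitely many S, it equals the
   bound exactly when some S is of the second kind. *)

From HB Require Import structures.
From mathcomp Require Import all_boot all_order all_algebra all_fingroup.
From mathcomp Require Import complex.
From mathcomp Require Import boolp classical_sets reals.
From mathcomp Require Import ring lra.
Import Order.TTheory GRing.Theory Num.Theory.
Local Open Scope ring_scope.

Set Implicit Arguments. Unset Strict Implicit. Unset Printing Implicit Defensive.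

Lemma sqr_normD_le2 (C : numClosedFieldType) (x y : C) :
  `|x + y| ^+ 2 <= 2%:R * (`|x| ^+ 2 + `|y| ^+ 2).
Proof.
rewrite -subr_ge0 (_ : _ - _ = `|x - y| ^+ 2) ?exprn_ge0 //.
by rewrite !normCK !rmorphB !rmorphD /=; ring.
Qed.

Lemma sqr_normD_le3 (C : numClosedFieldType) (x y z : C) :
  `|x + y + z| ^+ 2 <= 3%:R * (`|x| ^+ 2 + `|y| ^+ 2 + `|z| ^+ 2).
Proof.
rewrite -subr_ge0 (_ : _ - _ = `|x - y| ^+ 2 + `|y - z| ^+ 2 + `|x - z| ^+ 2).
  by rewrite !addr_ge0 ?exprn_ge0.
by rewrite !normCK !rmorphB !rmorphD /=; ring.
Qed.

Lemma invmx_of_mulmx1 (F : comUnitRingType) p (A B : 'M[F]_p) :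
  A *m B = 1%:M -> invmx A = B.
Proof.
move=> AB; have [uA _] := mulmx1_unit AB.
by rewrite -[RHS](mulKmx uA) AB mulmx1.
Qed.

Section Hermitian.
Variable R : realType.
Local Notation C := R[i].
Local Notation RC := (real_complex R).

Lemma real_complex_real (r : R) : RC r \is Num.real.
Proof. by apply/complex_realP; exists r. Qed.

Lemma real_complex_gt0 (r : R) : (0 < RC r) = (0 < r).
Proof. exact: (ltcR 0 r). Qed.

Lemma conj_real_complex (r : R) : (RC r)^* = RC r.
Proof. exact/conj_Creal/real_complex_real. Qed.

Lemma adjE m n (A : 'M[C]_(m, n)) i j : adj A i j = (A j i)^*.
Proof. by rewrite !mxE. Qed.

Lemma adjM m n p (A : 'M[C]_(m, n)) (B : 'M[C]_(n, p)) :
  adj (A *m B) = adj B *m adj A.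
Proof. by rewrite /adj map_mxM trmx_mul. Qed.

Lemma adjK m n (A : 'M[C]_(m, n)) : adj (adj A) = A.
Proof. by apply/matrixP => i j; rewrite !adjE conjCK. Qed.

Definition sqnorm p (x : 'cV[C]_p) : C := \sum_i `|x i 0| ^+ 2.

Definition qform n (Q : 'M[C]_n) (w : 'cV[C]_n) : C := (adj w *m Q *m w) 0 0.

Lemma sqnorm_ge0 p (x : 'cV[C]_p) : 0 <= sqnorm x.
Proof. by apply: sumr_ge0 => i _; rewrite exprn_ge0. Qed.

Lemma sqnormE p (x : 'cV[C]_p) : sqnorm x = \sum_i x i 0 * (x i 0)^*.
Proof. by apply: eq_bigr => i _; rewrite normCK. Qed.

Lemma adj_mulmx_self p (x : 'cV[C]_p) : (adj x *m x) 0 0 = sqnorm x.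
Proof. by rewrite sqnormE mxE; apply: eq_bigr => i _; rewrite adjE mulrC. Qed.

Lemma sqnormZ p (x : 'cV[C]_p) (r : R) :
  sqnorm (RC r *: x) = RC (r ^+ 2) * sqnorm x.
Proof.
rewrite /sqnorm mulr_sumr; apply: eq_bigr => i _.
by rewrite mxE normrM exprMn normCK conj_real_complex -rmorphM.
Qed.

Lemma sqnorm_vnorm p (x : 'cV[C]_p) : sqnorm x = RC (vnorm x ^+ 2).
Proof.
rewrite /sqnorm /vnorm sqr_sqrtr; last by apply: sumr_ge0 => i _; rewrite addr_ge0 ?sqr_ge0.
by rewrite rmorph_sum; apply: eq_bigr => i _; rewrite -add_Re2_Im2.
Qed.

Lemma vnorm_ge0 p (x : 'cV[C]_p) : 0 <= vnorm x.
Proof. exact: sqrtr_ge0. Qed.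

Lemma vnorm0 p : vnorm (0 : 'cV[C]_p) = 0.
Proof.
rewrite /vnorm big1 ?sqrtr0 // => i _.
by rewrite mxE /= expr0n /= addr0.
Qed.

Lemma vnorm_le_sqnorm p q (x : 'cV[C]_p) (y : 'cV[C]_q) (mu : R) : 0 <= mu ->
  sqnorm x <= RC (mu ^+ 2) * sqnorm y -> vnorm x <= mu * vnorm y.
Proof.
move=> mu0; rewrite !sqnorm_vnorm -rmorphM lecR -exprMn => le_sqr.
by rewrite -ler_sqr ?nnegrE ?mulr_ge0 ?vnorm_ge0.
Qed.

Lemma vnormZ p (x : 'cV[C]_p) (r : R) : vnorm (RC r *: x) = `|r| * vnorm x.
Proof.
apply/eqP; rewrite -(@eqrXn2 _ 2) ?mulr_ge0 ?vnorm_ge0 //.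
rewrite exprMn real_normK ?num_real //; apply/eqP/complexI.
by rewrite -sqnorm_vnorm sqnormZ sqnorm_vnorm -rmorphM.
Qed.

Lemma sqnorm_le_of_inner p (y u : 'cV[C]_p) (mu : R) : 0 <= mu ->
  ((adj y *m u) 0 0)^* = (adj y *m u) 0 0 ->
  sqnorm u <= RC mu * (adj y *m u) 0 0 ->
  sqnorm u <= RC (mu ^+ 2) * sqnorm y.
Proof.
move=> mu0; set t := (adj y *m u) 0 0 => t_real le_u.
have expand : sqnorm (RC mu *: y - u)
    = RC (mu ^+ 2) * sqnorm y - RC mu * (t + t^*) + sqnorm u.
  rewrite /t !sqnormE mxE rmorph_sum -big_split /= !mulr_sumr -sumrB -big_split /=.
  by apply: eq_bigr => i _; rewrite !mxE rmorphB !rmorphM /= conj_real_complex conjCK; ring.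
rewrite -subr_ge0 in le_u; rewrite -subr_ge0.
have -> : RC (mu ^+ 2) * sqnorm y - sqnorm u = sqnorm (RC mu *: y - u)
    + ((RC mu * t - sqnorm u) + (RC mu * t - sqnorm u)).
  by rewrite expand t_real; ring.
by apply: addr_ge0 (sqnorm_ge0 _) (addr_ge0 le_u le_u).
Qed.

Lemma RRe_ge0 (z : C) : 0 <= z -> RC (complex.Re z) = z.
Proof. by move=> /ger0_real/RRe_real. Qed.

End Hermitian.

Section OperatorNorm.
Variable R : realType.
Local Notation C := R[i].
Local Notation RC := (real_complex R).

Lemma vecF0 b p : vecF b (0 : 'cV[C]_p).
Proof. by apply/forallP => i; rewrite /inF mxE real0 orbT. Qed.

Lemma vecFZ b p (x : 'cV[C]_p) (r : R) : vecF b x -> vecF b (RC r *: x).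
Proof.
move=> /forallP vx; apply/forallP => i; rewrite /inF mxE.
by case: b vx => //= vx; exact: realM (real_complex_real r) (vx i).
Qed.

Variables (b : bool) (p : nat) (A : 'M[C]_p) (M : R).
Hypotheses (M_ge0 : 0 <= M)
  (A_bound : forall x, sqnorm (A *m x) <= RC (M ^+ 2) * sqnorm x).

Lemma vnorm_mulmx_le x : vnorm x <= 1 -> vnorm (A *m x) <= M.
Proof.
move=> x1; apply: le_trans (vnorm_le_sqnorm M_ge0 (A_bound x)) _.
by rewrite -[leRHS]mulr1 ler_wpM2l.
Qed.

Lemma opnorm_le : opnorm b A <= M.
Proof.
apply: ge_sup.
  exists (vnorm (A *m 0)), 0 => //; split; [exact: vecF0 | by rewrite vnorm0].
by move=> _ [x [_ x1] <-]; exact: vnorm_mulmx_le.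
Qed.

Lemma le_opnorm_eigen (lam : R) y : 0 <= lam -> A *m y = RC lam *: y ->
  vecF b y -> 0 < sqnorm y -> lam <= opnorm b A.
Proof.
move=> lam0 Ay vy y0.
have vy_gt0 : 0 < vnorm y.
  rewrite lt_def vnorm_ge0 andbT; apply: contraTneq y0 => vy0.
  by rewrite sqnorm_vnorm vy0 expr0n /= rmorph0 ltxx.
set x := RC (vnorm y)^-1 *: y.
have x1 : vnorm x = 1.
  by rewrite vnormZ ger0_norm ?invr_ge0 ?vnorm_ge0 // mulVf ?gt_eqF.
have Ax : vnorm (A *m x) = lam.
  by rewrite -scalemxAr Ay scalerA mulrC -scalerA vnormZ x1 mulr1 ger0_norm.
rewrite -Ax; apply: ub_le_sup; last by exists x => //; split; [exact: vecFZ | rewrite x1].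
by exists M => _ [z [_ z1] <-]; exact: vnorm_mulmx_le.
Qed.

End OperatorNorm.

Section DiagonalProjection.
Variables (R : realType) (n : nat) (S : {set 'I_n}).
Local Notation C := R[i].
Local Notation D := (diagS R S).

Lemma adj_diagS : adj D = D.
Proof.
apply/matrixP => i j; rewrite adjE !mxE eq_sym.
by case: eqP => [->|_]; case: (j \in S); rewrite ?mulr0n ?mulr1n ?conjC0 ?conjC1.
Qed.

Lemma diagS_idem : D *m D = D.
Proof.
rewrite mulmx_diag; congr diag_mx; apply/rowP => i; rewrite !mxE.
by case: (i \in S); rewrite ?mulr1 ?mulr0.
Qed.

Lemma diagS_mulmxE (z : 'cV[C]_n) i :
  (D *m z) i 0 = if i \in S then z i 0 else 0.
Proof. by rewrite mul_diag_mx !mxE; case: (i \in S); rewrite ?mul1r ?mul0r. Qed.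

Lemma diagS_mulmx_id (z : 'cV[C]_n) :
  (forall i, i \notin S -> z i 0 = 0) -> D *m z = z.
Proof.
move=> zS; apply/matrixP => i j; rewrite (ord1 j) diagS_mulmxE.
by case: ifP => // /negbT /zS ->.
Qed.

End DiagonalProjection.

Section SubframeOperator.
Variable R : realType.
Local Notation C := R[i].
Local Notation RC := (real_complex R).
Variables (n k : nat) (V : 'M[C]_(n, k)) (Q : 'M[C]_n) (a c : R).
Hypothesis VVadj : V *m adj V = (RC a)%:M + RC c *: Q.

Definition subframe_op (S : {set 'I_n}) : 'M[C]_k := adj V *m diagS R S *m V.

Lemma sqnorm_adj_mulmx (w : 'cV[C]_n) :
  sqnorm (adj V *m w) = RC a * sqnorm w + RC c * qform Q w.
Proof.
rewrite -!adj_mulmx_self adjM adjK mulmxA -[adj w *m V *m _]mulmxA VVadj.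
rewrite mulmxDr mulmxDl mul_mx_scalar -scalemxAl -scalemxAr -scalemxAl.
by rewrite mxE [X in X + _]mxE [X in _ + X]mxE.
Qed.

Variables (S : {set 'I_n}) (nu : R).

Lemma sqnorm_subframe_op_le : 0 <= c -> 0 <= a + c * nu ->
  (forall w : 'cV[C]_n, (forall i, i \notin S -> w i 0 = 0) ->
     qform Q w <= RC nu * sqnorm w) ->
  forall y, sqnorm (subframe_op S *m y) <= RC ((a + c * nu) ^+ 2) * sqnorm y.
Proof.
move=> c_ge0 mu_ge0 qform_le y; set D := diagS R S; set w := D *m (V *m y).
have -> : subframe_op S *m y = adj V *m w by rewrite /w !mulmxA.
have inner : adj y *m (adj V *m w) = adj w *m w.
  by rewrite /w !adjM adj_diagS -!mulmxA [D *m (D *m _)]mulmxA diagS_idem.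
apply: sqnorm_le_of_inner => //; rewrite inner adj_mulmx_self.
  exact/conj_Creal/ger0_real/sqnorm_ge0.
rewrite sqnorm_adj_mulmx rmorphD rmorphM mulrDl -mulrA lerD2l ler_wpM2l ?ler0c //.
by apply: qform_le => i iS; rewrite /w diagS_mulmxE (negbTE iS).
Qed.

Lemma opnorm_subframe_op_le b : 0 <= c -> 0 <= a + c * nu ->
  (forall w : 'cV[C]_n, (forall i, i \notin S -> w i 0 = 0) ->
     qform Q w <= RC nu * sqnorm w) ->
  opnorm b (subframe_op S) <= a + c * nu.
Proof.
by move=> c_ge0 mu_ge0 qform_le; apply: opnorm_le => //; apply: sqnorm_subframe_op_le.
Qed.

Variable w : 'cV[C]_n.
Hypotheses (w_supp : forall i, i \notin S -> w i 0 = 0)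
  (w_eigen : forall l, l \in S -> (Q *m w) l 0 = RC nu * w l 0).

Lemma diagS_VVadj_eigen : diagS R S *m (V *m adj V *m w) = RC (a + c * nu) *: w.
Proof.
apply/matrixP => i j; rewrite (ord1 j) diagS_mulmxE VVadj mulmxDl mul_scalar_mx -scalemxAl.
case: ifP => [iS|/negbT iS]; last by rewrite mxE w_supp // mulr0.
rewrite mxE [X in X + _]mxE [X in _ + X]mxE w_eigen // mxE rmorphD rmorphM /=; ring.
Qed.

Lemma subframe_op_eigen :
  subframe_op S *m (adj V *m w) = RC (a + c * nu) *: (adj V *m w).
Proof.
by rewrite /subframe_op -!mulmxA [V *m (adj V *m w)]mulmxA diagS_VVadj_eigen scalemxAr.
Qed.

Lemma sqnorm_adj_mulmx_eigen : sqnorm (adj V *m w) = RC (a + c * nu) * sqnorm w.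
Proof.
rewrite -!adj_mulmx_self adjM adjK -mulmxA [V *m (adj V *m w)]mulmxA.
by rewrite -{1}(diagS_mulmx_id w_supp) adjM adj_diagS -mulmxA diagS_VVadj_eigen -scalemxAr mxE.
Qed.

End SubframeOperator.

(* [d xj <= 9 D] and [nw <= 2 m (D + xj)] give [D >= d nw / (2 m (d + 9))],
   and [q = (m - 1) nw - D / 2]. *)
Lemma defect_gap_arith (K : realFieldType) (d m D xj nw q : K) :
  0 < d -> 0 < m -> 0 <= D -> 0 <= xj ->
  d * xj <= 9%:R * D -> nw <= m * (2%:R * (D + xj)) ->
  D = (nw * m - nw) * 2%:R - 2%:R * q ->
  q <= (m - 1 - d / (4%:R * m * (d + 9%:R))) * nw.
Proof.
move=> d_gt0 m_gt0 D_ge0 xj_ge0 le_dxj le_nw DE.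
have k_gt0 : 0 < 4%:R * m * (d + 9%:R) by rewrite !mulr_gt0 // ?ltr0n // addr_gt0 // ltr0n.
have le_dnw : d * nw <= d * (m * (2%:R * (D + xj))) by rewrite ler_wpM2l // ltW.
have le_mdxj : m * (d * xj) <= m * (9%:R * D) by rewrite ler_wpM2l // ltW.
have qE : q = nw * m - nw - D / 2%:R by rewrite DE; field.
set k := 4%:R * m * (d + 9%:R) in k_gt0 *.
rewrite -(ler_pM2l k_gt0).
have -> : k * ((m - 1 - d / k) * nw) = k * (m - 1) * nw - d * nw by field; rewrite gt_eqF.
rewrite /k qE; nra.
Qed.

Section SeidelForm.
Variable R : realType.
Local Notation C := R[i].
Local Notation RC := (real_complex R).
Variables (n : nat) (Q : 'M[C]_n).
Hypothesis seidelQ : seidel Q.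

Lemma seidel_conj i j : Q j i = (Q i j)^*.
Proof. by case: seidelQ => adjQ _; rewrite -[in LHS]adjQ adjE. Qed.

Lemma seidel_diag i : Q i i = 0.
Proof. by case: seidelQ => _ []. Qed.

Lemma seidel_norm i j : i != j -> `|Q i j| = 1.
Proof. by case: seidelQ => _ [_]; apply. Qed.

Lemma seidel_mul_conj i j : i != j -> Q i j * (Q i j)^* = 1.
Proof. by move=> ij; rewrite -normCK seidel_norm // expr1n. Qed.

Variable S : {set 'I_n}.

Section Defect.
Variable w : 'cV[C]_n.
Hypothesis w_supp : forall i, i \notin S -> w i 0 = 0.
Local Notation x i := (w i 0).

Definition defect i j := `|x i - Q i j * x j| ^+ 2.
Definition defect_sum := \sum_(i in S) \sum_(j in S | j != i) defect i j.

Lemma qform_conj : (qform Q w)^* = qform Q w.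
Proof. by case: seidelQ => adjQ _; rewrite /qform -[_^*]adjE !adjM adjK adjQ mulmxA. Qed.

Lemma sqnorm_supp : sqnorm w = \sum_(i in S) `|x i| ^+ 2.
Proof.
rewrite /sqnorm [RHS]big_mkcond /=; apply: eq_bigr => i _.
by case: ifP => // /negbT /w_supp ->; rewrite normr0 expr0n.
Qed.

Lemma defectE i j : j != i -> defect i j =
  `|x i| ^+ 2 + `|x j| ^+ 2 - ((x i)^* * Q i j * x j + ((x i)^* * Q i j * x j)^*).
Proof.
move=> ji; have u := seidel_mul_conj (i := i) (j := j); rewrite eq_sym ji in u.
rewrite /defect !normCK rmorphB !rmorphM /= conjCK.
transitivity (x i * (x i)^* + (Q i j * (Q i j)^*) * (x j * (x j)^*)
   - ((x i)^* * Q i j * x j + x i * (Q i j)^* * (x j)^*)); first by ring.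
by rewrite u // mul1r.
Qed.

Lemma qformE : qform Q w = \sum_i \sum_j (x i)^* * Q i j * x j.
Proof.
rewrite /qform mxE exchange_big /=; apply: eq_bigr => j _.
by rewrite mxE mulr_suml; apply: eq_bigr => i _; rewrite adjE.
Qed.

Lemma defect_sumE : defect_sum =
  (sqnorm w *+ #|S| - sqnorm w) *+ 2 - (qform Q w + (qform Q w)^*).
Proof.
pose c i j := (x i)^* * Q i j * x j.
have sum_neq (g : 'I_n -> C) i : i \in S ->
    \sum_(j in S | j != i) g j = \sum_(j in S) g j - g i.
  by move=> iS; rewrite [\sum_(j in S) _](bigD1 i) //= addrC addrK.
have cross : \sum_(i in S) \sum_(j in S | j != i) (c i j + (c i j)^*)
    = qform Q w + (qform Q w)^*.
  rewrite qformE rmorph_sum -big_split /= big_mkcond /=; apply: eq_bigr => i _.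
  rewrite rmorph_sum -big_split /=; case: ifP => [iS|/negbT /w_supp xi0].
    rewrite big_mkcond /=; apply: eq_bigr => j _.
    have [->|ji] := eqVneq j i.
      by rewrite andbF seidel_diag mulr0 mul0r conjC0 addr0.
    rewrite andbT; case: ifP => // /negbT /w_supp xj0.
    by rewrite xj0 mulr0 conjC0 addr0.
  by rewrite big1 // => j _; rewrite /c xi0 conjC0 !mul0r conjC0 addr0.
rewrite /defect_sum (eq_bigr (fun i => \sum_(j in S | j != i) (`|x i| ^+ 2 + `|x j| ^+ 2)
    - \sum_(j in S | j != i) (c i j + (c i j)^*))); last first.
  by move=> i _; rewrite -sumrB; apply: eq_bigr => j /andP [_ ji]; rewrite defectE.
rewrite sumrB cross; congr (_ - _).
rewrite (eq_bigr (fun i => (`|x i| ^+ 2 *+ #|S| - `|x i| ^+ 2) + (sqnorm w - `|x i| ^+ 2))).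
  by rewrite big_split /= !sumrB sumr_const sumrMnl -sqnorm_supp mulr2n.
by move=> i iS; rewrite big_split /= !sum_neq // sumr_const -sqnorm_supp.
Qed.

Lemma defect_sum_ge0 : 0 <= defect_sum.
Proof. by apply: sumr_ge0 => i _; apply: sumr_ge0 => j _; rewrite exprn_ge0. Qed.

Lemma defect_le_sum i j : i \in S -> j \in S -> j != i -> defect i j <= defect_sum.
Proof.
move=> iS jS ji; rewrite /defect_sum (bigD1 i) //= (bigD1 j) /=; last by rewrite jS ji.
rewrite -addrA lerDl; apply: addr_ge0; apply: sumr_ge0 => l _ //.
  by rewrite exprn_ge0.
by apply: sumr_ge0 => l' _; rewrite exprn_ge0.
Qed.

Lemma seidel_qform_le : qform Q w <= (#|S|%:R - 1) * sqnorm w.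
Proof.
have := defect_sum_ge0; rewrite defect_sumE qform_conj subr_ge0 -mulr2n lerMn2r /=.
by rewrite mulrBl mul1r mulr_natl.
Qed.

(* [(Q_ij - Q_ip Q_pj) x_j] is a combination of three defects, so an inconsistent
   triangle bounds [|x_j|^2], and then every [|x_l|^2], by the defect sum. *)
Lemma seidel_qform_le_gap i j p (d : R) :
  i \in S -> j \in S -> p \in S -> i != j -> i != p -> p != j ->
  0 < d -> RC d = `|Q i j - Q i p * Q p j| ^+ 2 ->
  qform Q w <= RC (#|S|%:R - 1 - d / (4%:R * #|S|%:R * (d + 9%:R))) * sqnorm w.
Proof.
move=> iS jS pS ij ip pj d_gt0 dE.
have le_dxj : `|Q i j - Q i p * Q p j| ^+ 2 * `|x j| ^+ 2 <= 9%:R * defect_sum.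
  rewrite -exprMn -normrM.
  have -> : (Q i j - Q i p * Q p j) * x j
      = (x i - Q i p * x p) + Q i p * (x p - Q p j * x j) - (x i - Q i j * x j).
    by ring.
  apply: le_trans (sqr_normD_le3 _ _ _) _; rewrite normrN normrM seidel_norm // mul1r.
  have -> : (9%:R : C) = 3%:R * 3%:R by rewrite -natrM.
  rewrite -mulrA ler_wpM2l ?ler0n //.
  have -> : 3%:R * defect_sum = defect_sum + defect_sum + defect_sum by ring.
  by rewrite !lerD // defect_le_sum // eq_sym.
have le_nw : sqnorm w <= #|S|%:R * (2%:R * (defect_sum + `|x j| ^+ 2)).
  rewrite sqnorm_supp mulr_natl -sumr_const; apply: ler_sum => l lS.
  have [->|lj] := eqVneq l j.
    rewrite mulr2n mulrDl mul1r addrA lerDr.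
    by rewrite !addr_ge0 ?defect_sum_ge0 ?exprn_ge0 ?normr_ge0.
  have -> : x l = (x l - Q l j * x j) + Q l j * x j by ring.
  apply: le_trans (sqr_normD_le2 _ _) _; rewrite normrM seidel_norm // mul1r.
  by rewrite ler_wpM2l ?ler0n // lerD2r defect_le_sum // eq_sym.
have DE := defect_sumE; rewrite qform_conj in DE.
have qE : RC (complex.Re (qform Q w)) = qform Q w.
  by apply/RRe_real/CrealP; rewrite qform_conj.
move: le_dxj le_nw DE; rewrite -(RRe_ge0 defect_sum_ge0) -qE -(RRe_ge0 (sqnorm_ge0 w)).
rewrite -(RRe_ge0 (exprn_ge0 2 (normr_ge0 (x j)))) -dE.
set D := complex.Re defect_sum; set xj := complex.Re _; set nw := complex.Re _.
set q := complex.Re (qform Q w) => le_dxj le_nw DE.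
rewrite -rmorphM lecR; apply: (@defect_gap_arith _ d _ D xj nw q d_gt0).
- by rewrite ltr0n card_gt0; apply/set0Pn; exists i.
- by rewrite -(lecR 0) /D RRe_ge0 ?defect_sum_ge0.
- by rewrite -(lecR 0) /xj RRe_ge0 ?exprn_ge0.
- by move: le_dxj; rewrite -rmorphM -(rmorph_nat (real_complex R) 9) -rmorphM lecR.
- move: le_nw; rewrite -(rmorph_nat (real_complex R) #|S|) -(rmorph_nat (real_complex R) 2).
  by rewrite -rmorphD -!rmorphM lecR.
apply: complexI; rewrite DE.
rewrite !(rmorphB (real_complex R), rmorphM (real_complex R)).
by rewrite !(rmorph_nat (real_complex R)) /=; ring.
Qed.

End Defect.

Lemma seidel_qform_gap i j p : i \in S -> j \in S -> p \in S ->
  i != j -> i != p -> p != j -> Q i j != Q i p * Q p j ->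
  exists nu : R, [/\ 0 <= nu, nu < #|S|%:R - 1 &
    forall w : 'cV[C]_n, (forall l, l \notin S -> w l 0 = 0) ->
      qform Q w <= RC nu * sqnorm w].
Proof.
move=> iS jS pS ij ip pj inconsistent.
set d := complex.Re (`|Q i j - Q i p * Q p j| ^+ 2).
have dE : RC d = `|Q i j - Q i p * Q p j| ^+ 2 by rewrite RRe_ge0 ?exprn_ge0.
have d_gt0 : 0 < d by rewrite -real_complex_gt0 dE exprn_gt0 // normr_gt0 subr_eq0.
have S_ge2 : 2%:R <= #|S|%:R :> R.
  have card_ip : #|[set i; p]| = 2%N by rewrite cards2 ip.
  rewrite ler_nat -card_ip subset_leq_card //.
  by apply/fintype.subsetP => l; rewrite !inE => /orP [] /eqP ->.
set k := 4%:R * #|S|%:R * (d + 9%:R).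
have k_gt0 : 0 < k by rewrite /k; apply: mulr_gt0; [apply: mulr_gt0 |]; lra.
have gap_gt0 : 0 < d / k by rewrite divr_gt0.
have gap_le1 : d / k <= 1 by rewrite ler_pdivrMr // mul1r /k; nra.
exists (#|S|%:R - 1 - d / k); split; [lra | lra |].
by move=> w w_supp; apply: (seidel_qform_le_gap w_supp iS jS pS).
Qed.

End SeidelForm.

Section Switching.
Variable R : realType.
Local Notation C := R[i].

Lemma mul_conj_norm1 (z : C) : `|z| = 1 -> z * z^* = 1.
Proof. by move=> z1; rewrite -normCK z1 expr1n. Qed.

Lemma invmx_diag_norm1 p (d : 'rV[C]_p) : (forall i, `|d 0 i| = 1) ->
  invmx (diag_mx d) = diag_mx (map_mx Num.conj d).
Proof.
move=> d1; apply: invmx_of_mulmx1; rewrite mulmx_diag; apply/matrixP => i j.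
by rewrite !mxE mul_conj_norm1.
Qed.

Lemma seidel_principal_sub n m (Q : 'M[C]_n) (s : 'I_m -> 'I_n) :
  seidel Q -> injective s -> seidel (principal_sub Q s).
Proof.
move=> seidelQ s_inj; split; last split.
- by apply/matrixP => i j; rewrite adjE !mxE (seidel_conj seidelQ) conjCK.
- by move=> i; rewrite mxE (seidel_diag seidelQ).
- by move=> i j ij; rewrite mxE (seidel_norm seidelQ) // (inj_eq s_inj).
Qed.

Lemma switching_JmI_phases m (M : 'M[C]_m) : switching_equiv M (JmI R m) ->
  exists e : 'I_m -> C, (forall i, `|e i| = 1) /\
    (forall i j, i != j -> M i j = e i * (e j)^*).
Proof.
case=> p [d [d1 ->]]; exists (fun i => d 0 (p i)); split => // i j ij.
have invP : invmx (perm_mx p : 'M[C]_m) = perm_mx p^-1.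
  by apply: invmx_of_mulmx1; rewrite -perm_mxM mulgV perm_mx1.
rewrite invmx_diag_norm1 // invP -!mulmxA -row_permE mulmxA mulmxA.
rewrite -[_ *m perm_mx p^-1]col_permE.
rewrite !mxE (bigD1 (p j)) //= big1 ?addr0; last first.
  by move=> l /negbTE pl; rewrite !mxE pl mulr0n mulr0.
rewrite mul_diag_mx !mxE eqxx mulr1n (inj_eq perm_inj) (negbTE ij).
by rewrite subr0 mulr1.
Qed.

Lemma switching_JmI_of_pivot m (M : 'M[C]_m) (o : 'I_m) : seidel M ->
  (forall i j, i != o -> j != o -> i != j -> M i j = M i o * M o j) ->
  switching_equiv M (JmI R m).
Proof.
move=> seidelM pivot.
pose d := \row_i (if i == o then 1 else M i o).
have d1 : forall i, `|d 0 i| = 1.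
  by move=> i; rewrite mxE; case: eqP => [_|/eqP io]; rewrite ?normr1 ?(seidel_norm seidelM).
exists 1%g, d; split => //.
rewrite perm_mx1 invmx1 mul1mx mulmx1 invmx_diag_norm1 //.
apply/matrixP => i j; rewrite mul_mx_diag mul_diag_mx !mxE.
have [->|ij] := eqVneq i j; first by rewrite (seidel_diag seidelM) mulr1n subrr mulr0 mul0r.
rewrite mulr0n subr0 mulr1.
move: ij; have [->|io] := eqVneq i o; have [->|jo] := eqVneq j o => ij.
- by [].
- by rewrite mul1r -(seidel_conj seidelM).
- by rewrite conjC1 mulr1.
by rewrite -(seidel_conj seidelM) pivot.
Qed.

End Switching.

Section PivotColumn.
Variable R : realType.
Local Notation C := R[i].
Variables (n : nat) (Q : 'M[C]_n).
Hypothesis seidelQ : seidel Q.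

(* On S, the p-th column of Q + I.  When Q_S is switching equivalent to J - I,
   with Q_ij = e_i conj(e_j), its entries are the phases e_l conj(e_p). *)
Definition pivot_col (S : {set 'I_n}) (p : 'I_n) : 'cV[C]_n :=
  \col_l (if l \in S then Q l p + (l == p)%:R else 0).

Lemma pivot_col_supp (S : {set 'I_n}) p l : l \notin S -> pivot_col S p l 0 = 0.
Proof. by rewrite mxE => /negbTE ->. Qed.

Lemma sqnorm_pivot_col_gt0 (S : {set 'I_n}) p : p \in S -> 0 < sqnorm (pivot_col S p).
Proof.
move=> pS; rewrite /sqnorm (bigD1 p) //= mxE pS eqxx (seidel_diag seidelQ) add0r.
by rewrite normr1 expr1n ltr_pwDl ?ltr01 // sumr_ge0 // => l _; rewrite exprn_ge0.
Qed.

Lemma vecF_pivot_col b (S : {set 'I_n}) p : (forall i j, i != j -> inF b (Q i j)) ->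
  vecF b (pivot_col S p).
Proof.
move=> Q_in; apply/forallP => l; rewrite mxE; case: ifP => _.
  have [->|lp] := eqVneq l p; last by rewrite addr0 Q_in.
  by rewrite (seidel_diag seidelQ) add0r /inF real1 orbT.
by rewrite /inF real0 orbT.
Qed.

Variables (m : nat) (s : 'I_m -> 'I_n) (o : 'I_m).
Hypotheses (s_inj : injective s)
  (switching : switching_equiv (principal_sub Q s) (JmI R m)).
Local Notation S := (s @: [set: 'I_m]).

Lemma pivot_col_eigen l : l \in S ->
  (Q *m pivot_col S (s o)) l 0 = (#|S|%:R - 1) * pivot_col S (s o) l 0.
Proof.
have [e [e1 Qe]] := switching_JmI_phases switching.
have {}Qe i j : i != j -> Q (s i) (s j) = e i * (e j)^* by move=> ij; rewrite -Qe // mxE.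
have w_s i : pivot_col S (s o) (s i) 0 = e i * (e o)^*.
  rewrite mxE imset_f // (inj_eq s_inj); have [->|io] := eqVneq i o.
    by rewrite (seidel_diag seidelQ) add0r mul_conj_norm1.
  by rewrite addr0 Qe.
move=> /imsetP [i _ ->]; rewrite mxE (bigID (mem S)) /= [X in _ + X]big1 ?addr0; last first.
  by move=> l' /pivot_col_supp ->; rewrite mulr0.
rewrite big_imset /=; last by move=> j j' _ _; apply: s_inj.
rewrite card_imset // cardsT card_ord w_s (bigD1 i) ?inE //=.
have Qii := seidel_diag seidelQ (s i); rewrite Qii mul0r add0r.
(* Off the diagonal, every term of row [s i] equals the entry [e i * (e o)^*]. *)
rewrite (eq_bigr (fun=> e i * (e o)^*)); last first.
  move=> j /andP [_ ji]; rewrite w_s Qe 1?eq_sym //.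
  by transitivity (e i * (e j * (e j)^*) * (e o)^*); [ring | rewrite mul_conj_norm1 ?mulr1].
have split_i : \sum_(j in [set: 'I_m]) (e i * (e o)^*)
    = e i * (e o)^* + \sum_(j in [set: 'I_m] | j != i) (e i * (e o)^*).
  by rewrite (bigD1 i) ?inE.
rewrite sumr_const cardsT card_ord in split_i.
by rewrite mulrBl mul1r mulr_natl split_i addrC addKr.
Qed.

End PivotColumn.

Section Frame.
Variable R : realType.
Local Notation C := R[i].
Local Notation RC := (real_complex R).
Variables (b : bool) (n k : nat) (f : 'I_n -> 'cV[C]_k) (Q : 'M[C]_n) (a c : R).
Local Notation V := (analysis f).
Hypotheses (f_in : forall i, vecF b (f i)) (seidelQ : seidel Q)
  (VVadj : V *m adj V = (RC a)%:M + RC c *: Q) (a_gt0 : 0 < a) (c_gt0 : 0 < c).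

Local Notation bound m := (a + c * (m%:R - 1)).

Lemma bound_gt0 m : (0 < m)%N -> 0 < bound m.
Proof.
move=> m_gt0; apply: (lt_le_trans a_gt0).
by rewrite lerDl mulr_ge0 ?(ltW c_gt0) // subr_ge0 ler1n.
Qed.

Lemma inF_offdiag i j : i != j -> inF b (Q i j).
Proof.
case: b f_in VVadj => // f_real VV ij; rewrite /inF /=.
have : (V *m adj V) i j \is Num.real.
  rewrite mxE; apply: sum_real => l _; rewrite adjE !mxE conjCK.
  apply: realM; rewrite ?CrealJ.
    exact: (forallP (f_real i) l).
  exact: (forallP (f_real j) l).
rewrite VV mxE [X in _ + X]mxE mxE (negbTE ij) mulr0n add0r.
by rewrite realMr ?real_complex_real // gt_eqF ?real_complex_gt0.
Qed.

Lemma vecF_adj_analysis (w : 'cV[C]_n) : vecF b w -> vecF b (adj V *m w).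
Proof.
case: b f_in => [_ _|f_real /forallP w_real]; apply/forallP => i; rewrite /inF //= mxE.
apply: sum_real => l _; apply: realM; last exact: w_real.
by rewrite adjE mxE conjCK; exact: (forallP (f_real l) i).
Qed.

Lemma Dnorm_le (S : {set 'I_n}) : (0 < #|S|)%N -> Dnorm b f S <= bound #|S|.
Proof.
move=> S_gt0; apply: (opnorm_subframe_op_le VVadj); rewrite ?ltW ?bound_gt0 //.
by move=> w w_supp; rewrite rmorphB rmorph_nat rmorph1; exact: seidel_qform_le.
Qed.

Lemma Dnorm_lt (S : {set 'I_n}) i j p : i \in S -> j \in S -> p \in S ->
  i != j -> i != p -> p != j -> Q i j != Q i p * Q p j ->
  Dnorm b f S < bound #|S|.
Proof.
move=> iS jS pS ij ip pj inconsistent.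
have [nu [nu_ge0 nu_lt qform_le]] := seidel_qform_gap seidelQ iS jS pS ij ip pj inconsistent.
apply: le_lt_trans (opnorm_subframe_op_le VVadj _ _ _ qform_le) _.
- exact: ltW.
- by rewrite addr_ge0 ?mulr_ge0 ?(ltW a_gt0) ?(ltW c_gt0).
by rewrite ltrD2l ltr_pM2l.
Qed.

Lemma Dnorm_ge (S : {set 'I_n}) (w : 'cV[C]_n) : (0 < #|S|)%N ->
  (forall i, i \notin S -> w i 0 = 0) ->
  (forall l, l \in S -> (Q *m w) l 0 = (#|S|%:R - 1) * w l 0) ->
  vecF b w -> 0 < sqnorm w -> bound #|S| <= Dnorm b f S.
Proof.
move=> S_gt0 w_supp w_eigen w_in w_gt0.
have w_eigen' l : l \in S -> (Q *m w) l 0 = RC (#|S|%:R - 1) * w l 0.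
  by move=> lS; rewrite w_eigen // rmorphB rmorph_nat rmorph1.
have bound_ge0 := ltW (bound_gt0 S_gt0).
have A_bound y :
    sqnorm (subframe_op V S *m y) <= RC (bound #|S| ^+ 2) * sqnorm y.
  apply: (sqnorm_subframe_op_le VVadj) => //; first exact: ltW.
  by move=> w' w'_supp; rewrite rmorphB rmorph_nat rmorph1; exact: seidel_qform_le.
apply: (le_opnorm_eigen bound_ge0 A_bound bound_ge0 (subframe_op_eigen VVadj w_supp w_eigen')).
  exact: vecF_adj_analysis.
by rewrite (sqnorm_adj_mulmx_eigen VVadj w_supp w_eigen') mulr_gt0 // real_complex_gt0 bound_gt0.
Qed.

Lemma e_inf_le m : (0 < m)%N -> e_inf b f m <= bound m.
Proof.
move=> m_gt0; apply: bigmax_le => [|S /eqP cardS]; first exact/ltW/bound_gt0.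
by rewrite -cardS Dnorm_le // cardS.
Qed.

Lemma switching_of_e_inf_eq m : (0 < m)%N -> e_inf b f m = bound m ->
  exists s : 'I_m -> 'I_n, injective s /\
    switching_equiv (principal_sub Q s) (JmI R m).
Proof.
move=> m_gt0 e_eq.
have /existsP [S /andP [/eqP cardS /eqP DS]] :
    [exists S : {set 'I_n}, (#|S| == m) && (Dnorm b f S == bound m)].
  apply: contraT => /existsPn none.
  suff : e_inf b f m < bound m by rewrite e_eq ltxx.
  apply: bigmax_lt => [|S /eqP cardS]; first exact: bound_gt0.
  move: (none S); rewrite cardS eqxx /= => ne.
  by rewrite lt_neqAle ne -cardS Dnorm_le // cardS.
pose o := Ordinal m_gt0; pose s i := enum_val (cast_ord (esym cardS) i).
have s_inj : injective s by move=> i j /enum_val_inj /cast_ord_inj.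
have sS i : s i \in S by apply: enum_valP.
exists s; split => //; apply: (@switching_JmI_of_pivot _ _ _ o).
  exact: seidel_principal_sub.
move=> i j io jo ij; rewrite !mxE; apply/eqP; apply: contraT => inconsistent.
have : Dnorm b f S < bound #|S|.
  by apply: (Dnorm_lt (sS i) (sS j) (sS o)); rewrite ?(inj_eq s_inj) // eq_sym.
by rewrite cardS DS ltxx.
Qed.

Lemma e_inf_eq_of_switching m (s : 'I_m -> 'I_n) : (0 < m)%N -> injective s ->
  switching_equiv (principal_sub Q s) (JmI R m) -> e_inf b f m = bound m.
Proof.
move=> m_gt0 s_inj switching; pose o := Ordinal m_gt0; set S := s @: [set: 'I_m].
have cardS : #|S| = m by rewrite card_imset // cardsT card_ord.
have bound_le : bound m <= Dnorm b f S.
  rewrite -cardS; apply: (Dnorm_ge (w := pivot_col Q S (s o))).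
  - by rewrite cardS.
  - exact: pivot_col_supp.
  - exact: (pivot_col_eigen seidelQ o s_inj switching).
  - exact/(vecF_pivot_col seidelQ)/inF_offdiag.
  - by apply: sqnorm_pivot_col_gt0; rewrite // imset_f.
apply/le_anti; rewrite e_inf_le //=; apply: le_trans bound_le _.
by apply: (@le_bigmax_cond _ _ _ _ S (fun S : {set 'I_n} => #|S| == m)); rewrite cardS.
Qed.

End Frame.

Theorem corollary3p5 (R : realType) (b : bool) (n k : nat)
    (f : 'I_n -> 'cV[R[i]]_k) (Q : 'M[R[i]]_n) :
  (0 < k < n)%N ->
  parseval_frame b f ->
  uniform_c b f 2 ->
  seidel Q ->
  analysis f *m adj (analysis f)
    = (k%:R / n%:R)%:M + (real_complex R (cnk R n k)) *: Q ->
  forall m : nat, (1 <= m <= n)%N ->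
    e_inf b f m <= k%:R / n%:R + (m - 1)%:R * cnk R n k /\
    (e_inf b f m = k%:R / n%:R + (m - 1)%:R * cnk R n k <->
     exists s : 'I_m -> 'I_n, injective s /\
       switching_equiv (principal_sub Q s) (JmI R m)).
Proof.
move=> /andP [k_gt0 kn] [f_in _] _ seidelQ VVadj m /andP [m_gt0 _].
have a_gt0 : 0 < k%:R / n%:R :> R by rewrite divr_gt0 ?ltr0n // (ltn_trans k_gt0).
have c_gt0 : 0 < cnk R n k.
  rewrite sqrtr_gt0 divr_gt0 // ltr0n muln_gt0 ?k_gt0 ?subn_gt0 //.
  by rewrite expn_gt0 (ltn_trans k_gt0) // (leq_ltn_trans k_gt0).
have {}VVadj : analysis f *m adj (analysis f)
    = (real_complex R (k%:R / n%:R))%:M + real_complex R (cnk R n k) *: Q.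
  by rewrite VVadj fmorph_div !rmorph_nat.
rewrite (_ : (m - 1)%:R * _ = cnk R n k * (m%:R - 1)); last by rewrite natrB // mulrC.
split; first exact: (e_inf_le b seidelQ VVadj a_gt0 c_gt0 m_gt0).
split=> [|[s [s_inj switching]]].
  exact: (switching_of_e_inf_eq seidelQ VVadj a_gt0 c_gt0 m_gt0).
exact: (e_inf_eq_of_switching f_in seidelQ VVadj a_gt0 c_gt0 m_gt0 s_inj switching).
Qed.
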